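(* Let $\mathcal{Z}\subset\mathbb{R}^n$ be closed and $f:\mathbb{R}^n\times\mathcal{Z}\to\mathbb{R}^n$ continuous. Then the set-valued map $z\mapsto\hat f(z):=f(z,P_\mathcal{Z}(z))=\{f(z,p):p\in P_\mathcal{Z}(z)\}$ is locally bounded and outer semicontinuous. Furthermore, if $\mathcal{Z}$ is $\alpha$-prox-regular for some $\alpha>0$, then $\hat f$ is single-valued and continuous on $\mathcal{Z}+\tfrac{1}{2\alpha}\operatorname{int}\mathbb{B}$.
   Context: $P_\mathcal{Z}(z):=\{\tilde z\in\mathcal{Z}:\|z-\tilde z\|=\inf_{y\in\mathcal{Z}}\|z-y\|\}$. $\operatorname{int}\mathbb{B}$ is the open unit ball. A Clarke regular closed set $\mathcal{Z}$ (i.e., $x\mapsto T_x\mathcal{Z}$ inner semicontinuous, with $T_x\mathcal{Z}$ the tangent cone and $N_x\mathcal{Z}$ its polar) is $\alpha$-prox-regular if for every $x\in\mathcal{Z}$ and every $\eta\in N_x\mathcal{Z}$, $\langle\eta,y-x\rangle\le\alpha\|\eta\|\|y-x\|^2$ for all $y\in\mathcal{Z}$. *)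

From HB Require Import structures.
From mathcomp Require Import all_boot all_order all_algebra.
From mathcomp Require Import all_classical all_reals all_analysis.
Set Implicit Arguments. Unset Strict Implicit. Unset Printing Implicit Defensive.
Import Order.TTheory GRing.Theory Num.Theory.
Import numFieldNormedType.Exports.
Local Open Scope classical_set_scope.
Local Open Scope ring_scope.

Section Defs.
Variables (R : realType) (n : nat).
Local Notation V := 'rV[R]_n.

Definition edot (u v : V) : R := \sum_(i < n) u ord0 i * v ord0 i.
Definition enorm (u : V) : R := Num.sqrt (edot u u).

Definition projZ (Z : set V) (z : V) : set V :=
  [set zt | Z zt /\ enorm (z - zt) = inf [set enorm (z - y) | y in Z]].

Definition tcone (Z : set V) (x : V) : set V :=
  [set v | exists (t : nat -> R) (w : nat -> V),
     (forall k, 0 < t k) /\ t @ \oo --> 0 /\ w @ \oo --> v /\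
     (forall k, Z (x + t k *: w k))].

Definition ncone (Z : set V) (x : V) : set V :=
  [set eta | forall v, tcone Z x v -> edot eta v <= 0].

Definition inner_sc (Z : set V) (M : V -> set V) : Prop :=
  forall x, Z x -> forall u : nat -> V, (forall k, Z (u k)) -> u @ \oo --> x ->
  forall v, M x v -> exists w : nat -> V, (forall k, M (u k) (w k)) /\ w @ \oo --> v.

Definition clarke_regular (Z : set V) : Prop := closed Z /\ inner_sc Z (tcone Z).

Definition prox_regular (alpha : R) (Z : set V) : Prop :=
  clarke_regular Z /\
  forall x, Z x -> forall eta, ncone Z x eta -> forall y, Z y ->
    edot eta (y - x) <= alpha * enorm eta * enorm (y - x) ^+ 2.

Definition locally_bounded (F : V -> set V) : Prop :=
  forall x : V, exists U : set V, nbhs x U /\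
    exists M : R, forall z y, U z -> F z y -> enorm y <= M.

Definition outer_sc (F : V -> set V) : Prop :=
  forall (x y : V) (u w : nat -> V), u @ \oo --> x -> w @ \oo --> y ->
    (forall k, F (u k) (w k)) -> F x y.

Definition enlarge (Z : set V) (r : R) : set V :=
  [set z | exists x, Z x /\ enorm (z - x) < r].

End Defs.

From HB Require Import structures.
From mathcomp Require Import all_boot all_order all_algebra.
From mathcomp Require Import all_classical all_reals all_analysis.
From mathcomp Require Import ring lra.
Set Implicit Arguments. Unset Strict Implicit. Unset Printing Implicit Defensive.
Import Order.TTheory GRing.Theory Num.Theory.
Import numFieldNormedType.Exports.
Local Open Scope classical_set_scope.
Local Open Scope ring_scope.

(* Near any point x the graph of the projection P_Z stays in a compact set,
   and it is closed; so whenever u --> x along a proper filter and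
   s_i \in P_Z(u_i), the pairs (u_i, s_i) cluster at some (x, p) with
   p \in P_Z(x), and by continuity f(x, p) is a cluster point of f(u_i, s_i).
   This gives outer semicontinuity, and local boundedness is the boundedness
   of f on that compact set.  For alpha-prox-regular Z, minimality of
   |z - p| along tangent directions puts z - p in the normal cone at p; adding
   the prox-regularity inequalities at two projections p1, p2 of z gives
   |p1 - p2|^2 <= 2 alpha |z - p1| |p1 - p2|^2, which forces p1 = p2 when
   |z - p1| < 1 / (2 alpha).  A single-valued selection whose value at z is a
   cluster point along every refinement of the neighbourhood filter is
   continuous at z. *)

Section Euclidean.
Variables (R : realType) (n : nat).
Local Notation V := 'rV[R]_n.
Implicit Types u v w : V.

Lemma edotC u v : edot u v = edot v u.
Proof. by apply: eq_bigr => i _; rewrite mulrC. Qed.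

Lemma edotBl u v w : edot (u - v) w = edot u w - edot v w.
Proof. by rewrite /edot -sumrB; apply: eq_bigr => i _; rewrite !mxE mulrBl. Qed.

Lemma edotBr u v w : edot w (u - v) = edot w u - edot w v.
Proof. by rewrite edotC edotBl !(edotC w). Qed.

Lemma edotZl (a : R) u w : edot (a *: u) w = a * edot u w.
Proof. by rewrite /edot mulr_sumr; apply: eq_bigr => i _; rewrite !mxE mulrA. Qed.

Lemma edotZr (a : R) u w : edot w (a *: u) = a * edot w u.
Proof. by rewrite edotC edotZl edotC. Qed.

Lemma edot_ge0 u : 0 <= edot u u.
Proof. by apply: sumr_ge0 => i _; rewrite -expr2 sqr_ge0. Qed.

Lemma edot_eq0 u : edot u u = 0 -> u = 0.
Proof.
move=> u0; apply/matrixP => i j; rewrite ord1 mxE.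
have sq_ge0 (k : 'I_n) : xpredT k -> 0 <= u ord0 k * u ord0 k.
  by rewrite -expr2 sqr_ge0.
by move: (psumr_eq0P sq_ge0 u0 (i := j) isT) => /eqP; rewrite mulf_eq0 orbb => /eqP.
Qed.

Lemma enorm_ge0 u : 0 <= enorm u.
Proof. exact: sqrtr_ge0. Qed.

Lemma enorm_sqr u : enorm u ^+ 2 = edot u u.
Proof. by rewrite sqr_sqrtr // edot_ge0. Qed.

Lemma enorm_distC u v : enorm (u - v) = enorm (v - u).
Proof.
rewrite /enorm /edot; congr Num.sqrt; apply: eq_bigr => i _.
by rewrite !mxE -mulrNN !opprB.
Qed.

Lemma normr_le_enorm u : `|u| <= enorm u.
Proof.
rewrite [leLHS]/Num.norm /= mx_normrE.
apply: bigmax_le => [|[i j] _ /=]; first exact: enorm_ge0.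
rewrite ord1 /enorm -(sqrtr_sqr (u ord0 j)) ler_sqrt ?edot_ge0 //.
rewrite /edot (bigD1 j) //= -expr2 lerDl.
by apply: sumr_ge0 => k _; rewrite -expr2 sqr_ge0.
Qed.

Lemma continuous_edotr w : continuous (edot w).
Proof.
apply: (continuous_big (op := +%R) (x0 := 0) add_continuous) => i _ v.
exact: cvgM (cvg_cst _) (@coord_continuous _ _ _ _ _ v).
Qed.

Lemma continuous_edot_diag : continuous (fun v => edot v v).
Proof.
apply: (continuous_big (op := +%R) (x0 := 0) add_continuous) => i _ v.
exact: cvgM (@coord_continuous _ _ _ _ _ v) (@coord_continuous _ _ _ _ _ v).
Qed.

Lemma continuous_enorm : continuous (@enorm R n).
Proof.
move=> v; apply: continuous_comp; first exact: continuous_edot_diag.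
exact: sqrt_continuous.
Qed.

Lemma continuous_enorm_subr w : continuous (fun v => enorm (v - w)).
Proof.
move=> v; apply: continuous_comp; last exact: continuous_enorm.
exact: cvgB cvg_id (cvg_cst w).
Qed.

End Euclidean.

Arguments continuous_edotr {R n} w x.
Arguments continuous_edot_diag {R n} x.
Arguments continuous_enorm_subr {R n} w.

Section ClusterPoints.
Context {T U : topologicalType}.

Lemma closed_cluster (E : set T) (F : set_system T) :
  closed E -> F E -> cluster F `<=` E.
Proof. by move=> clE FE p Fp; apply: clE => B /(Fp _ _ FE). Qed.

Lemma cluster_cvg_eq (F : set_system T) (x y : T) :
  hausdorff_space T -> F --> x -> cluster F y -> x = y.
Proof. by move=> hT /cvg_cluster Fx /Fx; exact: hT. Qed.

Lemma cluster_within_continuous (A : set T) (h : T -> U) (F : set_system T) a :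
  Filter F -> {within A, continuous h} -> F A -> A a -> cluster F a ->
  cluster (h @ F) (h a).
Proof.
move=> FF /subspace_continuousP hC FA Aa Fa B C FB /(hC a Aa) aC.
have FBA : F (h @^-1` B `&` A) by apply: filterI.
have [x [[Bx Ax] Cx]] := Fa _ _ FBA aC.
by exists (h x); split => //; exact: Cx.
Qed.

Lemma cvg_refine_cluster (h : T -> U) (F : set_system T) (y : U) :
  Filter F -> (forall G, ProperFilter G -> F `<=` G -> cluster (h @ G) y) ->
  h @ F --> y.
Proof.
move=> FF Fcl B yB; apply: contrapT => nFB.
pose G := within (h @^-1` (~` B)) F.
have PG : ProperFilter G.
  apply: Build_ProperFilter => G0; apply: nFB.
  have nnB : F (fun x => ~ B (h x) -> False) := G0.
  by apply: filterS nnB => x; exact: contrapT.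
have [x [nBx Bx]] := Fcl G PG (@cvg_within _ F _ _) (~` B) B (withinT _ FF) yB.
exact: nBx Bx.
Qed.

End ClusterPoints.

Section Projection.
Variables (R : realType) (n : nat) (Z : set 'rV[R]_n).
Local Notation V := 'rV[R]_n.

Lemma projZP z p :
  projZ Z z p <-> Z p /\ forall y, Z y -> enorm (z - p) <= enorm (z - y).
Proof.
have lbZ : has_lbound [set enorm (z - y) | y in Z].
  by exists 0 => _ [y _ <-]; exact: enorm_ge0.
split=> [[Zp ->]|[Zp pmin]].
  by split=> // y Zy; apply: ge_inf => //; exists y.
split=> //; apply/eqP; rewrite eq_le; apply/andP; split; last first.
  by apply: ge_inf => //; exists p.
apply: lb_le_inf; first by exists (enorm (z - p)), p.
by move=> _ [y Zy <-]; exact: pmin.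
Qed.

Lemma projZ_normr_le x z z0 p :
  Z z0 -> projZ Z z p -> `|p - x| <= enorm (z - z0) + `|z - x|.
Proof.
move=> Zz0 /projZP[_ pmin].
have -> : p - x = (p - z) + (z - x) by rewrite addrA subrK.
apply: le_trans (ler_normD _ _) _; apply: lerD => //.
by rewrite distrC (le_trans (normr_le_enorm _)) ?pmin.
Qed.

Lemma closed_ball_compact (x : V) r : 0 < r -> compact (closed_ball x r).
Proof.
move=> r0; apply: bounded_closed_compact; last exact: closed_ball_closed.
rewrite closed_ballE // /= /bounded_near; near=> M => y /= xy.
have -> : y = x + (y - x) by rewrite addrC subrK.
apply: le_trans (ler_normD _ _) _; rewrite distrC.
apply: le_trans (lerD (lexx _) xy) _.
by near: M; apply: nbhs_pinfty_ge; exact: num_real.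
Unshelve. all: by end_near. Qed.

Lemma projZ_exists z : closed Z -> Z !=set0 -> exists p, projZ Z z p.
Proof.
move=> clZ [z0 Zz0]; set r := enorm (z - z0) + 1.
have r0 : 0 < r by rewrite /r ltr_wpDl ?enorm_ge0.
set A := Z `&` closed_ball z r.
have Az0 : A z0.
  split=> //; rewrite closed_ballE // /closed_ball_ /= /r.
  by rewrite (le_trans (normr_le_enorm _)) // lerDl.
have cA : compact A.
  by rewrite /A setIC; apply: compact_closedI => //; exact: closed_ball_compact.
have [p /set_mem[Zp _] pmin] := compact_EVT_min (ex_intro _ z0 Az0) cA
  (continuous_subspaceT (continuous_enorm_subr z)).
exists p; apply/projZP; split=> // y Zy; rewrite !(enorm_distC z).
have [Ay|nAy] := pselect (A y); first exact/pmin/mem_set.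
apply: le_trans (pmin z0 (mem_set Az0)) (le_trans _ (normr_le_enorm _)).
have zy : r < `|z - y|.
  by rewrite ltNge; apply/negP => zy; apply: nAy; split=> //; rewrite closed_ballE.
by rewrite enorm_distC distrC ltW // (lt_trans _ zy) // ltrDl.
Qed.

Lemma closed_projZ_graph : closed Z -> closed [set q : V * V | projZ Z q.1 q.2].
Proof.
move=> clZ.
have -> : [set q : V * V | projZ Z q.1 q.2] = snd @^-1` Z `&` \bigcap_(y in Z)
    (fun q : V * V => enorm (q.1 - q.2) - enorm (q.1 - y)) @^-1` [set r | r <= 0].
  apply/seteqP; split=> q; rewrite /= projZP.
    by move=> [Zq qmin]; split=> // y Zy /=; rewrite subr_le0 qmin.
  by move=> [Zq qmin]; split=> // y Zy; rewrite -subr_le0 (qmin y).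
apply: closedI.
  by apply: preimage_closed => // q _; exact: cvg_snd.
apply: closed_bigI => y _; apply: preimage_closed; last exact: closed_le.
have dist_y : continuous (fun q : V * V => enorm (q.1 - y)).
  move=> q; apply: (continuous_comp (f := fst) (g := fun w : V => enorm (w - y))).
    exact: cvg_fst.
  exact: continuous_enorm_subr.
have dist_diag : continuous (fun q : V * V => enorm (q.1 - q.2)).
  move=> q; apply: continuous_comp; first exact: sub_continuous.
  exact: continuous_enorm.
by move=> q _; apply: cvgB; [exact: dist_diag | exact: dist_y].
Qed.

Lemma projZ_locally_compact (x : V) : closed Z ->
  exists K : set (V * V), [/\ compact K, K `<=` [set q | Z q.2] &
    \forall z \near x, forall p, projZ Z z p -> K (z, p)].
Proof.
move=> clZ; have [[z0 Zz0]|noZ] := pselect (Z !=set0); last first.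
  exists set0; split=> //; first exact: compact0.
  by near=> z => p [Zp _]; apply: noZ; exists p.
set M := enorm (x - z0) + 1.
have M0 : 0 < M + 1 by rewrite /M -addrA ltr_wpDl ?enorm_ge0.
exists (closed_ball x 1 `*` (closed_ball x (M + 1) `&` Z)); split.
- apply: compact_setX; first exact: closed_ball_compact.
  by apply: compact_closedI => //; exact: closed_ball_compact.
- by move=> q [_ []].
near=> z => p zp; rewrite /= !closed_ballE // /closed_ball_ /=.
have xz : `|x - z| < 1 by near: z; exact: cvgr_dist_lt.
have zM : enorm (z - z0) < M.
  by near: z; apply: cvgr_lt; [exact: continuous_enorm_subr | rewrite ltrDl].
split; [exact: ltW | split; last by case: zp].
rewrite distrC (le_trans (projZ_normr_le x Zz0 zp)) // distrC.
by rewrite ltW // ltrD.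
Unshelve. all: by end_near. Qed.

Lemma projZ_cluster (I : Type) (H : set_system I) (u s : I -> V) x :
  ProperFilter H -> closed Z -> u @ H --> x ->
  (\forall i \near H, projZ Z (u i) (s i)) ->
  exists p, projZ Z x p /\ cluster ((fun i => (u i, s i)) @ H) (x, p).
Proof.
move=> PH clZ ux us; have [K [cK _ nearK]] := projZ_locally_compact x clZ.
have HK : H [set i | K (u i, s i)].
  have uK : H [set i | forall p, projZ Z (u i) p -> K (u i, p)] := ux _ nearK.
  by apply: filterS2 uK us => i /[apply].
have [[a p] [_ cl]] := cK ((fun i => (u i, s i)) @ H) _ HK.
have ap : projZ Z a p := closed_cluster (closed_projZ_graph clZ) us cl.
suff xa : x = a by subst a; exists p.
have cl_fst : cluster (fst @ ((fun i => (u i, s i)) @ H)) (a, p).1.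
  apply: (cluster_within_continuous (A := setT)) cl => //; last exact: filterT.
  by apply: continuous_subspaceT => q; exact: cvg_fst.
exact: cluster_cvg_eq (@norm_hausdorff _ _) ux cl_fst.
Qed.

Lemma projZ_normal z p : projZ Z z p -> ncone Z p (z - p).
Proof.
move=> /projZP[_ pmin] v [t [w [t_gt0 [t0 [wv Zw]]]]].
have tangent_step k : 2 * edot (z - p) (w k) <= t k * edot (w k) (w k).
  have dist_le : enorm (z - p) <= enorm (z - p - t k *: w k).
    by rewrite -addrA -opprD; exact: pmin.
  have : edot (z - p) (z - p) <= edot (z - p - t k *: w k) (z - p - t k *: w k).
    by rewrite -!enorm_sqr !expr2 ler_pM ?enorm_ge0.
  rewrite !(edotBl, edotBr, edotZl, edotZr) (edotC (w k) z) (edotC (w k) p).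
  by have := t_gt0 k; nra.
have : 2 * edot (z - p) v <= 0 * edot v v.
  apply: (ler_cvg_to (a := \oo) (f := fun k => 2 * edot (z - p) (w k))
    (g := fun k => t k * edot (w k) (w k))); last exact: nearW.
  - apply: cvgM; first exact: cvg_cst.
    exact: (cvg_comp _ _ wv (continuous_edotr (z - p) v)).
  - by apply: cvgM => //; exact: (cvg_comp _ _ wv (continuous_edot_diag v)).
by rewrite mul0r pmulr_rle0.
Qed.

Lemma projZ_unique alpha z p1 p2 : 0 < alpha -> prox_regular alpha Z ->
  enlarge Z (1 / (2 * alpha)) z -> projZ Z z p1 -> projZ Z z p2 -> p1 = p2.
Proof.
move=> alpha_gt0 [_ prox] [x [Zx zx]] zp1 zp2.
have N1 := projZ_normal zp1; have N2 := projZ_normal zp2.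
move/projZP: zp1 => [Zp1 p1min]; move/projZP: zp2 => [Zp2 p2min].
have d21 : enorm (z - p2) = enorm (z - p1).
  by apply/eqP; rewrite eq_le p1min ?p2min.
have d_lt : enorm (z - p1) * (2 * alpha) < 1.
  by rewrite -ltr_pdivlMr ?mulr_gt0 // (le_lt_trans (p1min _ Zx)).
have P1 := prox _ Zp1 _ N1 _ Zp2; have P2 := prox _ Zp2 _ N2 _ Zp1.
rewrite d21 (enorm_distC p1) !enorm_sqr in P1 P2.
have sum_normals : edot (z - p1) (p2 - p1) + edot (z - p2) (p1 - p2) =
    edot (p2 - p1) (p2 - p1).
  by rewrite !(edotBl, edotBr); ring.
set E := edot (p2 - p1) (p2 - p1) in P1 P2 sum_normals *.
have : E * (1 - enorm (z - p1) * (2 * alpha)) <= 0 by nra.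
rewrite pmulr_lle0 ?subr_gt0 // => E_le0.
have /edot_eq0/eqP : E = 0 by apply/eqP; rewrite eq_le E_le0 edot_ge0.
by rewrite subr_eq0 => /eqP.
Qed.

End Projection.

Section ComposedProjection.
Variables (R : realType) (n : nat) (Z : set 'rV[R]_n).
Local Notation V := 'rV[R]_n.
Variable f : V -> V -> V.
Hypothesis clZ : closed Z.
Hypothesis fC : {within [set q : V * V | Z q.2], continuous (fun q => f q.1 q.2)}.
Local Notation fhat := (fun z => f z @` projZ Z z).

Lemma fhat_cluster (I : Type) (H : set_system I) (u s : I -> V) x :
  ProperFilter H -> u @ H --> x -> (\forall i \near H, projZ Z (u i) (s i)) ->
  exists p, projZ Z x p /\ cluster ((fun i => f (u i) (s i)) @ H) (f x p).
Proof.
move=> PH ux us; have [p [xp cl]] := projZ_cluster PH clZ ux us.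
exists p; split=> //.
have HZ : ((fun i => (u i, s i)) @ H) [set q | Z q.2] by apply: filterS us => i [].
exact: (cluster_within_continuous (a := (x, p)) _ fC HZ xp.1 cl).
Qed.

Lemma fhat_locally_bounded : locally_bounded fhat.
Proof.
move=> x; have [K [cK KZ nearK]] := projZ_locally_compact x clZ.
have fK : compact ((fun q => enorm (f q.1 q.2)) @` K).
  apply: continuous_compact cK => q.
  apply: continuous_comp; last exact: continuous_enorm.
  exact: (continuous_subspaceW KZ fC).
have [M [_ Mbound]] := compact_bounded fK.
exists [set z | forall p, projZ Z z p -> K (z, p)]; split=> //.
exists (M + 1) => z _ Kz [p zp <-].
rewrite -[leLHS]ger0_norm ?enorm_ge0 //.
by apply: (Mbound (M + 1)); [rewrite ltrDl | exists (z, p) => //; exact: Kz].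
Qed.

Lemma fhat_outer_sc : outer_sc fhat.
Proof.
move=> x y u w ux wy uw.
have /choice[s us] : forall k, exists p, projZ Z (u k) p /\ f (u k) p = w k.
  by move=> k; have [p ? ?] := uw k; exists p.
have [p [xp]] := fhat_cluster (s := s) _ ux (filterE _ (fun k => (us k).1)).
have -> : (fun k => f (u k) (s k)) = w by apply/funext => k; exact: (us k).2.
move=> cl; exists p => //.
exact/esym/(cluster_cvg_eq (@norm_hausdorff _ _) wy cl).
Qed.

Lemma fhat_single_valued_continuous alpha : 0 < alpha -> prox_regular alpha Z ->
  exists g : V -> V,
    (forall z, enlarge Z (1 / (2 * alpha)) z -> fhat z = [set g z]) /\
    {within enlarge Z (1 / (2 * alpha)), continuous g}.
Proof.
move=> alpha_gt0 prox; set E := enlarge Z (1 / (2 * alpha)).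
have /choice[pr prE] : forall z, exists p, E z -> projZ Z z p.
  move=> z; have [Ez|nEz] := pselect (E z); last by exists 0 => /nEz.
  have [x [Zx _]] := Ez.
  by have [p zp] := projZ_exists z clZ (ex_intro _ x Zx); exists p.
exists (fun z => f z (pr z)); split.
  move=> z Ez; apply/seteqP; split=> [_ [p zp <-]|_ ->] /=.
    by rewrite (projZ_unique alpha_gt0 prox Ez zp (prE z Ez)).
  by exists (pr z) => //; exact: prE.
apply/subspace_continuousP => z Ez; apply: cvg_refine_cluster => G PG EG.
have [p [zp]] := fhat_cluster (u := id) (s := pr) PG (cvg_trans EG (cvg_within _))
  (EG (fun w => projZ Z w (pr w)) (filterE _ prE)).
by rewrite (projZ_unique alpha_gt0 prox Ez zp (prE z Ez)).
Qed.

End ComposedProjection.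

Theorem lemma3p1 (R : realType) (n : nat) (Z : set 'rV[R]_n)
  (f : 'rV[R]_n -> 'rV[R]_n -> 'rV[R]_n) :
  closed Z ->
  {within [set p : 'rV[R]_n * 'rV[R]_n | Z p.2], continuous (fun p => f p.1 p.2)} ->
  let fhat := fun z : 'rV[R]_n => (f z) @` (projZ Z z) in
  (locally_bounded fhat /\ outer_sc fhat) /\
  (forall alpha : R, 0 < alpha -> prox_regular alpha Z ->
     exists g : 'rV[R]_n -> 'rV[R]_n,
       (forall z, enlarge Z (1 / (2 * alpha)) z -> fhat z = [set g z]) /\
       {within enlarge Z (1 / (2 * alpha)), continuous g}).
Proof.
move=> clZ fC fhat; split; first split.
- exact: fhat_locally_bounded.
- exact: fhat_outer_sc.
- exact: fhat_single_valued_continuous.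
Qed.
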